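(* Let $S \geq 2$ and let $f:\{1,\dots,S\}\to\{1,\dots,S\}$ be a uniformly random map, i.e. the values $f(1),\dots,f(S)$ are independent and each is uniformly distributed on $\{1,\dots,S\}$. Define $C_1,\dots,C_S$ and $C$ as in the context. Then $$\mathrm{E}(C) < \mathrm{E}(C_1)\,(\ln S + 1),$$ and there is a constant $K>0$, independent of $S$, such that $\mathrm{Var}(C) \leq K\, S \ln S$ for all $S \geq 2$.
   Context: Setting: the random map $f$ models the state-to-state dynamics of an agent following a deterministic policy in an environment with a deterministic transition function whose prior is uniform, so that from each state $s$ the next state $f(s)$ is uniformly distributed over the $S$ states, independently across states. Construction of the cycles. Start at state $1$ and follow the orbit $1, f(1), f(f(1)),\dots$ until a previously visited state is reached for the first time; from that point the orbit is periodic, and $\mathcal{C}_1$ is the set of states on this cycle, with $C_1 = |\mathcal{C}_1|$. Inductively, for $i = 2,\dots,S$, start at state $i$ and follow its orbit under $f$ until it reaches a state already visited either earlier in this same orbit or in one of the orbits started from $1,\dots,i-1$. If it first reaches a state already visited earlier in its own orbit (call this event $T_i$; $T_1$ always occurs), the orbit from $i$ has closed a new cycle, $\mathcal{C}_i$ is the set of states on that cycle and $C_i = |\mathcal{C}_i|$. Otherwise the orbit has run into a path or cycle produced by an earlier starting state; then $\mathcal{C}_i = \emptyset$ and $C_i = 0$. Set $\mathcal{C} = \mathcal{C}_1\cup\dots\cup\mathcal{C}_S$ and $C = |\mathcal{C}| = \sum_{i=1}^S C_i$; equivalently, $C$ is the number of states lying on a cycle of $f$. All expectations and variances are taken with respect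 to the randomness of $f$, and $\ln$ denotes the natural logarithm. *)

From mathcomp Require Import all_boot.
From Stdlib Require Import Reals.

Set Implicit Arguments.
Unset Strict Implicit.
Unset Printing Implicit Defensive.

(* States are 'I_S = {0,...,S-1}; state "1" of the paper is the ordinal 0.
   A map f is an element of {ffun 'I_S -> 'I_S}; the uniform random map is
   the uniform distribution on these S^S maps. *)

Definition on_cycle (S : nat) (f : {ffun 'I_S -> 'I_S}) (y : 'I_S) : bool :=
  fconnect f (f y) y.

Definition Ccount (S : nat) (f : {ffun 'I_S -> 'I_S}) : nat :=
  #|[set y : 'I_S | on_cycle f y]|.

(* C_1 = size of the cycle closed by the orbit of the first state
   (the cyclic states reachable from the first state). *)
Definition C1count (S : nat) (f : {ffun 'I_S -> 'I_S}) : nat :=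
  #|[set y : 'I_S | [exists x : 'I_S, (val x == 0) && fconnect f x y]
                     && on_cycle f y]|.

Definition sumC (S : nat) : nat := \sum_(f : {ffun 'I_S -> 'I_S}) Ccount f.
Definition sumC2 (S : nat) : nat :=
  \sum_(f : {ffun 'I_S -> 'I_S}) (Ccount f * Ccount f).
Definition sumC1 (S : nat) : nat := \sum_(f : {ffun 'I_S -> 'I_S}) C1count f.

Local Open Scope R_scope.

Definition nmaps (S : nat) : R := INR (S ^ S)%nat.

Definition EC (S : nat) : R := INR (sumC S) / nmaps S.
Definition EC1 (S : nat) : R := INR (sumC1 S) / nmaps S.
Definition EC2 (S : nat) : R := INR (sumC2 S) / nmaps S.
Definition VarC (S : nat) : R := EC2 S - EC S * EC S.

From mathcomp Require Import fingroup perm.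
From mathcomp Require Import all_boot zify.

Set Implicit Arguments.
Unset Strict Implicit.
Unset Printing Implicit Defensive.

(* Fix an injective k-tuple w of states and a successor pattern on its indices:
   exactly S^(S-k) maps follow the pattern along w, so the pairs (w, f) number
   npattern k = S^_k S^(S-k), and k npattern k + S npattern (k+1) = S npattern k.
   A cyclic state is the head of the cycle through it, a pair of cyclic states
   spans one or two cycles, and the first state heads its rho-shaped orbit
   w_0 -> ... -> w_m -> w_j, whose cycle has m+1-j states.  Summing over all maps,
   S^S E(C) <= sum_k npattern k,  2 S^(S+1) E(C_1) >= sum_k k(k+1) npattern k  and
   S^S E(C^2) <= sum_k (2k-1) npattern k; the recurrence turns these into
   E(C) + 1 <= 2 E(C_1) and E(C^2) <= 2S.  Together with E(C_1) <= S and
   ln S >= 1/2 (ln S >= 1 once S >= 3) both bounds follow. *)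

Lemma card_ffun_prescribed (T U : finType) k (w : k.-tuple T) (g : 'I_k -> U) :
  uniq w ->
  #|[pred h : {ffun T -> U} | [forall i, h (tnth w i) == g i]]| = #|U| ^ (#|T| - k).
Proof.
move=> w_uniq; have w_inj : injective (tnth w) := elimT (tuple_uniqP w) w_uniq.
pose F (x : T) : pred U :=
  if [pick i | tnth w i == x] is Some i then pred1 (g i) else predT.
have -> : #|[pred h : {ffun T -> U} | [forall i, h (tnth w i) == g i]]|
        = #|(family F : simpl_pred {ffun T -> U})|.
  apply: eq_card => h; rewrite !inE; apply/forallP/familyP => /= hw x.
  - by rewrite /F; case: pickP => [i /eqP <-|] //=; apply: hw.
  - have := hw (tnth w x); rewrite /F; case: pickP => [i /eqP /w_inj -> //|].
    by move/(_ x); rewrite eqxx.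
rewrite card_family foldrE big_map big_enum /=.
rewrite (eq_bigr (fun x => if x \notin (w : seq T) then #|U| else 1)); last first.
  move=> x _; rewrite /F; case: pickP => [i /eqP <-|not_w]; first by rewrite card1 mem_tnth.
  case: ifP => // /negbFE /tnthP [i def_x].
  by move: (not_w i); rewrite def_x eqxx.
rewrite -big_mkcond /= prod_nat_const; congr (_ ^ _).
have := cardC (mem (w : seq T)); rewrite (card_uniqP w_uniq) size_tuple.
have -> : #|[predC w]| = #|[pred x | x \notin (w : seq T)]| by apply: eq_card.
by move=> <-; rewrite addKn.
Qed.

Lemma order_traject (T : finType) (g : T -> T) z n :
  uniq (traject g z n) -> looping g z n -> order g z = n.
Proof.
move=> uniq_t /loopingP loop_t; rewrite /order -[RHS](size_traject g z n).
rewrite -(card_uniqP uniq_t); apply: eq_card => y; rewrite !inE.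
apply/idP/trajectP => [/iter_findex <-|[i _ ->]]; last exact: fconnect_iter.
by apply/trajectP/loop_t.
Qed.

Lemma leq_sum_term (I : finType) (P : pred I) (F : I -> nat) i :
  P i -> F i <= \sum_(j | P j) F j.
Proof. by move=> Pi; rewrite (bigD1 i) //= leq_addr. Qed.

Lemma sum_nat_neq0 (I : finType) (P : pred I) (F : I -> nat) :
  \sum_(i | P i) F i != 0 -> exists2 i, P i & F i != 0.
Proof. by rewrite sum_nat_eq0 => /forallPn [i]; rewrite negb_imply => /andP []; exists i. Qed.

Lemma sum_nat_le_unique (I : finType) (P : pred I) (F : I -> nat) b :
  (forall i j, P i -> P j -> F i != 0 -> F j != 0 -> i = j) ->
  (forall i, P i -> F i <= b) -> \sum_(i | P i) F i <= b.
Proof.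
move=> F_uniq F_le; case: (pickP (fun i => P i && (F i != 0))) => [i /andP [Pi Fi]|F0].
  rewrite (bigD1 i) //= big1 ?addn0 ?F_le // => j /andP [Pj ji].
  by apply/eqP; apply: contraR ji => Fj; apply/eqP; apply: F_uniq.
by rewrite big1 // => j Pj; move: (F0 j); rewrite Pj => /negbFE /eqP.
Qed.

(** * Maps following a walk pattern *)

Section Patterns.
Variable S : nat.
Local Notation endo := {ffun 'I_S -> 'I_S}.

(* The default of [nth] never matters: every pattern below keeps [next i < k]. *)
Definition follows k (f : endo) (w : k.-tuple 'I_S) (next : nat -> nat) : bool :=
  [forall i : 'I_k, f (tnth w i) == nth (tnth w i) w (next i)].

Lemma follows_nth k (f : endo) (w : k.-tuple 'I_S) next d i :
  follows f w next -> i < k -> next i < k -> f (nth d w i) = nth d w (next i).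
Proof.
move=> /forallP fw ik next_ik; have /eqP := fw (Ordinal ik).
by rewrite (tnth_nth d) => ->; apply: set_nth_default; rewrite size_tuple.
Qed.

Lemma follows_intro k (f : endo) (w : k.-tuple 'I_S) next d :
  (forall i, i < k -> next i < k) ->
  (forall i, i < k -> f (nth d w i) = nth d w (next i)) -> follows f w next.
Proof.
move=> next_lt fw; apply/forallP => i; apply/eqP.
by rewrite (tnth_nth d) fw // (set_nth_default d) ?size_tuple ?next_lt.
Qed.

Lemma sum_follows k (w : k.-tuple 'I_S) next : uniq w ->
  \sum_(f : endo) follows f w next = S ^ (S - k).
Proof.
move=> w_uniq.
have := card_ffun_prescribed (fun i => nth (tnth w i) w (next i)) w_uniq.
rewrite !card_ord => <-.
by rewrite -sum1_card [RHS]big_mkcond; apply: eq_bigr => f _; rewrite !inE.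
Qed.

Lemma card_uniq_tuple k : #|[pred w : k.-tuple 'I_S | uniq w]| = S ^_ k.
Proof.
rewrite -[S in RHS]card_ord -(card_uniq_tuples k predT).
by apply: eq_card => w; rewrite !inE all_predT.
Qed.

Lemma uniq_tuple_lt k (w : k.+1.-tuple 'I_S) : uniq w -> k < S.
Proof.
by move=> w_uniq; rewrite -[S]card_ord -(size_tuple w) -(card_uniqP w_uniq) max_card.
Qed.

Lemma card_uniq_tuple_head k (x : 'I_S) :
  S * #|[pred w : k.+1.-tuple 'I_S | uniq w && (tnth w ord0 == x)]| = S ^_ k.+1.
Proof.
have card_head_sym y :
    #|[pred w : k.+1.-tuple 'I_S | uniq w && (tnth w ord0 == y)]| =
    #|[pred w : k.+1.-tuple 'I_S | uniq w && (tnth w ord0 == x)]|.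
  pose s := tperm x y.
  have map_inj : injective (fun w : k.+1.-tuple 'I_S => map_tuple s w).
    by move=> u v /(congr1 val) /(inj_map (@perm_inj _ s)) /val_inj.
  rewrite -!sum1_card (reindex_inj map_inj) /=; apply: eq_bigl => w.
  rewrite !inE map_inj_uniq ?tnth_map; last exact: perm_inj.
  by rewrite -[y in _ == y](tpermL x y) (inj_eq (@perm_inj _ s)).
rewrite -(card_uniq_tuple k.+1) -[S in S * _]card_ord -sum_nat_const.
rewrite -(eq_bigr _ (fun y _ => card_head_sym y)) -sum1_card.
rewrite (partition_big (fun w : k.+1.-tuple 'I_S => tnth w ord0) xpredT) //=.
by apply: eq_bigr => y _; rewrite -sum1_card; apply: eq_bigl => w; rewrite inE.
Qed.

Definition npattern k := S ^_ k * S ^ (S - k).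

Lemma sum_uniq_follows k next :
  \sum_(w : k.-tuple 'I_S | uniq w) \sum_(f : endo) follows f w next = npattern k.
Proof.
rewrite (eq_bigr _ (fun w w_uniq => sum_follows next w_uniq)) sum_nat_const.
by rewrite card_uniq_tuple.
Qed.

Lemma npattern_rec k : k * npattern k + S * npattern k.+1 = S * npattern k.
Proof.
rewrite /npattern; case: (ltnP k S) => [lt_kS | le_Sk].
  rewrite ffactnSr.
  have -> : S - k = (S - k.+1).+1 by lia.
  have def_S : S = k + (S - k.+1).+1 by lia.
  rewrite expnS; move: (S ^_ k) (S ^ (S - k.+1)) def_S => F P.
  move: (S - k.+1) => d def_S; rewrite [in LHS]def_S [in RHS]def_S; nia.
rewrite (@ffact_small S k.+1) ?ltnS // mul0n muln0 addn0.
case: (ltnP S k) => [lt_Sk | le_kS]; first by rewrite ffact_small // !mul0n !muln0.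
by have -> : k = S by lia.
Qed.

Lemma npattern_large : npattern S.+1 = 0.
Proof. by rewrite /npattern ffact_small. Qed.

Lemma sum_k_npattern_tail n :
  \sum_(m < n) m.+1 * npattern m.+1 + S * npattern n.+1 = S * npattern 1.
Proof.
elim: n => [|n IHn]; first by rewrite big_ord0.
by rewrite big_ord_recr /= -addnA npattern_rec.
Qed.

Lemma sum_k2_npattern_tail n :
  \sum_(m < n) m.+1 * m.+1 * npattern m.+1 + S * n * npattern n.+1 =
  S * \sum_(m < n) npattern m.+1.
Proof.
elim: n => [|n IHn]; first by rewrite !big_ord0 !muln0.
rewrite !big_ord_recr /=; have := npattern_rec n.+1; move: IHn.
move: (npattern n.+1) (npattern n.+2) (\sum_(i < n) i.+1 * i.+1 * npattern i.+1)
  (\sum_(i < n) npattern i.+1) => a b s t; nia.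
Qed.

Lemma sum_k_npattern : \sum_(m < S) m.+1 * npattern m.+1 = S * S ^ S.
Proof.
have := sum_k_npattern_tail S; rewrite npattern_large muln0 addn0 => ->.
rewrite /npattern ffactn1; case: S => // n; by rewrite subn1 /= -expnS.
Qed.

Lemma sum_k2_npattern :
  \sum_(m < S) m.+1 * m.+1 * npattern m.+1 = S * \sum_(m < S) npattern m.+1.
Proof. by have := sum_k2_npattern_tail S; rewrite npattern_large muln0 addn0. Qed.

(** * Walks traced by orbits *)

(* [rho_next m j] is the rho-shaped walk w_0 -> ... -> w_m -> w_j (a cycle when
   [j = 0]); [two_cycles_next n p] is the pair of cycles w_0 -> ... -> w_p -> w_0
   and w_(p+1) -> ... -> w_n -> w_(p+1). *)
Definition rho_next m j i := if i == m then j else i.+1.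
Definition two_cycles_next n p i := if i == p then 0 else if i == n then p.+1 else i.+1.

Lemma rho_next_lt m j i : j <= m -> i <= m -> rho_next m j i < m.+1.
Proof. by rewrite /rho_next; case: eqP; lia. Qed.

Lemma two_cycles_next_lt n p i : p < n -> i <= n -> two_cycles_next n p i < n.+1.
Proof. by rewrite /two_cycles_next; do 2?case: ifP => /eqP; lia. Qed.

Section Orbits.
Variable f : endo.

Lemma iter_order_on_cycle x : on_cycle f x -> iter (order f x) f x = x.
Proof. by move=> x_cyc; apply/(orbitPcycle 2 4). Qed.

Lemma order_pred_lt x : (order f x).-1 < S.
Proof. by rewrite orderSpred; apply: leq_trans (max_card _) _; rewrite card_ord. Qed.

Lemma Ccount_sum : Ccount f = \sum_y on_cycle f y.
Proof. by rewrite /Ccount -sum1_card big_mkcond; apply: eq_bigr => y _; rewrite inE. Qed.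

Lemma size_orbit_pred x : size (orbit f x) == (order f x).-1.+1.
Proof. by rewrite size_orbit orderSpred. Qed.

Definition orbit_tuple x := Tuple (size_orbit_pred x).

Lemma nth_orbit x d i : i < order f x -> nth d (orbit f x) i = iter i f x.
Proof. by move=> i_lt; rewrite (set_nth_default x) ?nth_traject ?size_orbit. Qed.

Lemma nth_orbit_on_cycle x d i : on_cycle f x -> i < order f x ->
  f (nth d (orbit f x) i) = nth d (orbit f x) (rho_next (order f x).-1 0 i).
Proof.
move=> x_cyc i_lt; have next_lt : rho_next (order f x).-1 0 i < order f x.
  by rewrite -[X in _ < X]orderSpred rho_next_lt // -ltnS orderSpred.
rewrite !nth_orbit // -iterS /rho_next; case: eqP => [->|//].
by rewrite orderSpred iter_order_on_cycle.
Qed.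

Lemma follows_orbit x : on_cycle f x ->
  follows f (orbit_tuple x) (rho_next (order f x).-1 0).
Proof.
move=> x_cyc; apply: (follows_intro (d := x)) => [i i_lt|i]; first exact: rho_next_lt.
by move=> i_lt; apply: nth_orbit_on_cycle; rewrite // -orderSpred.
Qed.

Lemma size_orbit2 x y : size (orbit f x ++ orbit f y) == (order f x + order f y).-1.+1.
Proof. by rewrite size_cat !size_orbit prednK // addn_gt0 order_gt0. Qed.

Definition orbit2_tuple x y := Tuple (size_orbit2 x y).

Lemma tnth_orbit2_tuple x y : tnth (orbit2_tuple x y) ord0 = x /\
  tnth (orbit2_tuple x y) (inord (order f x).-1.+1) = y.
Proof.
have ox := order_gt0 f x; have oy := order_gt0 f y.
have p_lt : (order f x).-1.+1 < (order f x + order f y).-1.+1 by lia.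
rewrite !(tnth_nth x) /= inordK // prednK //.
by rewrite !nth_cat size_orbit ox ltnn subnn !nth_orbit.
Qed.

Lemma orbit2_uniq x y : on_cycle f y -> y \notin orbit f x -> uniq (orbit2_tuple x y).
Proof.
move=> y_cyc y_notin; rewrite /= cat_uniq !orbit_uniq andbT /=.
apply/hasPn => z z_y; apply: contra y_notin; rewrite -!fconnect_orbit => x_z.
apply: connect_trans x_z _; rewrite (fconnect_cycle _ z_y) ?in_orbit //.
by rewrite -fconnect_f.
Qed.

Lemma follows_orbit2 x y : on_cycle f x -> on_cycle f y ->
  follows f (orbit2_tuple x y) (two_cycles_next (order f x + order f y).-1 (order f x).-1).
Proof.
move=> x_cyc y_cyc; have ox := order_gt0 f x; have oy := order_gt0 f y.
apply: (follows_intro (d := x)) => i; first by move=> i_lt; apply: two_cycles_next_lt; lia.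
move=> /=; rewrite prednK ?addn_gt0 ?ox // => i_lt.
rewrite !nth_cat !size_orbit /two_cycles_next.
case: (ltnP i (order f x)) => [i_ltx | i_gex].
  rewrite nth_orbit_on_cycle // /rho_next.
  case: (i =P (order f x).-1) => [_ | i_notlast]; first by rewrite ox.
  have -> : (i == (order f x + order f y).-1) = false by apply/eqP; lia.
  by rewrite ifT //; lia.
have -> : (i == (order f x).-1) = false by apply/eqP; lia.
have iy_lt : i - order f x < order f y by lia.
rewrite nth_orbit_on_cycle // /rho_next.
case: (i - order f x =P (order f y).-1) => [i_last | i_notlast].
  have -> : (i == (order f x + order f y).-1) by apply/eqP; lia.
  by rewrite prednK // ltnn subnn.
have -> : (i == (order f x + order f y).-1) = false by apply/eqP; lia.
by rewrite ltnNge (leqW i_gex) /= subSn.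
Qed.

Lemma follows_rho_iter m j (w : m.+1.-tuple 'I_S) i : j <= m ->
  follows f w (rho_next m j) -> i <= m -> nth (tnth w ord0) w i = iter i f (tnth w ord0).
Proof.
move=> j_le fw; elim: i => [|i IHi] i_lt; first exact: (esym (tnth_nth _ w ord0)).
have i_le := ltnW i_lt; rewrite iterS -IHi //.
rewrite (follows_nth _ fw) ?rho_next_lt //; by rewrite /rho_next ltn_eqF.
Qed.

Lemma follows_rho_loop m j (w : m.+1.-tuple 'I_S) : j <= m ->
  follows f w (rho_next m j) -> iter m.+1 f (tnth w ord0) = iter j f (tnth w ord0).
Proof.
move=> j_le fw; rewrite iterS -(follows_rho_iter j_le fw (leqnn m)).
rewrite (follows_nth _ fw) ?rho_next_lt //.
by rewrite /rho_next eqxx (follows_rho_iter j_le fw).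
Qed.

Lemma follows_rho_orbit m j (w : m.+1.-tuple 'I_S) : uniq w -> j <= m ->
  follows f w (rho_next m j) ->
  [/\ order f (tnth w ord0) = m.+1, (w : seq 'I_S) = orbit f (tnth w ord0)
    & j = findex f (tnth w ord0) (iter (order f (tnth w ord0)) f (tnth w ord0))].
Proof.
set z := tnth w ord0 => w_uniq j_le fw.
have w_traject : (w : seq 'I_S) = traject f z m.+1.
  apply: (@eq_from_nth _ z); rewrite size_tuple ?size_traject // => i i_lt.
  by rewrite nth_traject // (follows_rho_iter j_le fw).
have loop_eq := follows_rho_loop j_le fw.
have order_z : order f z = m.+1.
  apply: order_traject; first by rewrite -w_traject.
  by rewrite /looping loop_eq; apply/trajectP; exists j.
split=> //; first by rewrite /orbit order_z.
by rewrite order_z loop_eq findex_iter // order_z.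
Qed.

Lemma rho_walk_unique m m' (w : m.+1.-tuple 'I_S) (w' : m'.+1.-tuple 'I_S) j j' :
  uniq w -> uniq w' -> tnth w ord0 = tnth w' ord0 -> j <= m -> j' <= m' ->
  follows f w (rho_next m j) -> follows f w' (rho_next m' j') ->
  [/\ m = m', (w : seq 'I_S) = w' & j = j'].
Proof.
move=> w_uniq w'_uniq head_eq j_le j'_le fw fw'.
have [order_w orbit_w findex_w] := follows_rho_orbit w_uniq j_le fw.
have [order_w' orbit_w' findex_w'] := follows_rho_orbit w'_uniq j'_le fw'.
rewrite -head_eq in order_w' orbit_w' findex_w'.
split; [apply: succn_inj; rewrite -order_w order_w' // | by rewrite orbit_w orbit_w' |].
by rewrite findex_w findex_w'.
Qed.

Lemma follows_rho_card m j (w : m.+1.-tuple 'I_S) x :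
  uniq w -> j <= m -> tnth w ord0 = x -> follows f w (rho_next m j) ->
  m.+1 - j <= #|[set y | fconnect f x y && on_cycle f y]|.
Proof.
move=> w_uniq j_le head_x fw.
have w_iter := follows_rho_iter j_le fw; have loop_eq := follows_rho_loop j_le fw.
rewrite head_x in w_iter loop_eq.
have <- : size (drop j w) = m.+1 - j by rewrite size_drop size_tuple.
rewrite -(card_uniqP (drop_uniq j w_uniq)).
apply/subset_leq_card/subsetP => _ /(nthP x) [k k_lt <-].
rewrite size_drop size_tuple in k_lt; rewrite nth_drop w_iter; last lia.
rewrite inE fconnect_iter /=; set y := iter (j + k) f x.
have cycle_y : iter (m - j) f (f y) = y.
  rewrite /y -iterSr -iterD -subSn // addnA subnK; last lia.
  by rewrite addnC iterD loop_eq -iterD addnC.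
by rewrite /on_cycle -{2}cycle_y fconnect_iter.
Qed.

Lemma tnth_orbit_tuple0 x : tnth (orbit_tuple x) ord0 = x.
Proof. by rewrite (tnth_nth x) nth_orbit. Qed.

Lemma on_cycle_le_walks y : on_cycle f y <=
  \sum_(m < S) \sum_(w : m.+1.-tuple 'I_S | uniq w && (tnth w ord0 == y))
    follows f w (rho_next m 0).
Proof.
case y_cyc: (on_cycle f y) => //.
apply: leq_trans (leq_sum_term (i := Ordinal (order_pred_lt y)) _ _) => //=.
apply: leq_trans (leq_sum_term (i := orbit_tuple y) _ _) => /=.
  by rewrite follows_orbit.
by rewrite orbit_uniq tnth_orbit_tuple0 eqxx.
Qed.

Lemma Ccount_le_walks :
  Ccount f <= \sum_(m < S) \sum_(w : m.+1.-tuple 'I_S | uniq w) follows f w (rho_next m 0).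
Proof.
rewrite Ccount_sum; apply: leq_trans; first by apply: leq_sum => y _; apply: on_cycle_le_walks.
rewrite exchange_big; apply: eq_leq; apply: eq_bigr => m _.
by rewrite [RHS](partition_big (fun w : m.+1.-tuple 'I_S => tnth w ord0) xpredT).
Qed.

Lemma reach_cyclic_ge x :
  \sum_(m < S) \sum_(w : m.+1.-tuple 'I_S | uniq w && (tnth w ord0 == x))
     \sum_(j < m.+1) follows f w (rho_next m j) * (m.+1 - j)
  <= #|[set y | fconnect f x y && on_cycle f y]|.
Proof.
have walk_eq m m' (w : m.+1.-tuple 'I_S) (w' : m'.+1.-tuple 'I_S) (j : 'I_m.+1) (j' : 'I_m'.+1) :
    uniq w && (tnth w ord0 == x) -> uniq w' && (tnth w' ord0 == x) ->
    follows f w (rho_next m j) * (m.+1 - j) != 0 ->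
    follows f w' (rho_next m' j') * (m'.+1 - j') != 0 ->
    [/\ m = m', (w : seq 'I_S) = w' & (j : nat) = j'].
  move=> /andP [w_uniq /eqP w_x] /andP [w'_uniq /eqP w'_x].
  rewrite !muln_eq0 !eqb0 !negb_or !negbK => /andP [fw _] /andP [fw' _].
  apply: rho_walk_unique fw fw' => //; [by rewrite w_x w'_x | by rewrite -ltnS..].
apply: sum_nat_le_unique => [m m' _ _ | m _].
  move=> /sum_nat_neq0 [w w_ok /sum_nat_neq0 [j _ fw]].
  move=> /sum_nat_neq0 [w' w'_ok /sum_nat_neq0 [j' _ fw']].
  by apply: val_inj; case: (walk_eq _ _ w w' j j' w_ok w'_ok fw fw').
apply: sum_nat_le_unique => [w w' w_ok w'_ok | w w_ok].
  move=> /sum_nat_neq0 [j _ fw] /sum_nat_neq0 [j' _ fw'].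
  by apply: val_inj; case: (walk_eq _ _ w w' j j' w_ok w'_ok fw fw').
apply: sum_nat_le_unique => [j j' _ _ fw fw' | j _].
  by apply: val_inj; case: (walk_eq _ _ w w j j' w_ok w_ok fw fw').
case/andP: w_ok => w_uniq /eqP w_x.
case fw: (follows f w (rho_next m j)); rewrite ?mul1n //.
exact: (follows_rho_card w_uniq (ltn_ord j) w_x fw).
Qed.

Lemma on_cycle2_le_walks x y : on_cycle f x && on_cycle f y <=
  \sum_(m < S) \sum_(w : m.+1.-tuple 'I_S | uniq w && (tnth w ord0 == x))
     (y \in (w : seq 'I_S)) * follows f w (rho_next m 0) +
  \sum_(n < S) \sum_(p < n) \sum_(w : n.+1.-tuple 'I_S |
     (uniq w && (tnth w ord0 == x)) && (tnth w (inord p.+1) == y))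
     follows f w (two_cycles_next n p).
Proof.
case x_cyc: (on_cycle f x) => //; case y_cyc: (on_cycle f y) => //=.
have [y_in | y_notin] := boolP (y \in orbit f x).
  apply: leq_trans (leq_addr _ _).
  apply: leq_trans (leq_sum_term (i := Ordinal (order_pred_lt x)) _ _) => //=.
  apply: leq_trans (leq_sum_term (i := orbit_tuple x) _ _) => /=.
    by rewrite y_in follows_orbit.
  by rewrite orbit_uniq tnth_orbit_tuple0 eqxx.
apply: leq_trans (leq_addl _ _).
have w_uniq := orbit2_uniq y_cyc y_notin.
have p_lt : (order f x).-1 < (order f x + order f y).-1.
  by have := order_gt0 f x; have := order_gt0 f y; lia.
apply: leq_trans (leq_sum_term (i := Ordinal (uniq_tuple_lt w_uniq)) _ _) => //=.
apply: leq_trans (leq_sum_term (i := Ordinal p_lt) _ _) => //=.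
apply: leq_trans (leq_sum_term (i := orbit2_tuple x y) _ _) => /=.
  by rewrite follows_orbit2.
by have [-> ->] := tnth_orbit2_tuple x y; rewrite w_uniq !eqxx.
Qed.

Lemma Ccount_sq_le_walks : Ccount f * Ccount f <=
  \sum_(m < S) \sum_(w : m.+1.-tuple 'I_S | uniq w) m.+1 * follows f w (rho_next m 0) +
  \sum_(n < S) \sum_(p < n) \sum_(w : n.+1.-tuple 'I_S | uniq w)
    follows f w (two_cycles_next n p).
Proof.
rewrite Ccount_sum big_distrl /=.
apply: leq_trans.
  apply: leq_sum => x _; rewrite big_distrr /=.
  by apply: leq_sum => y _; rewrite mulnb; apply: on_cycle2_le_walks.
under eq_bigr => x _ do rewrite big_split /=.
rewrite big_split /=; apply: leq_add; apply: eq_leq.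
- under eq_bigr => x _ do rewrite exchange_big /=.
  rewrite exchange_big /=; apply: eq_bigr => m _.
  rewrite [RHS](partition_big (fun w : m.+1.-tuple 'I_S => tnth w ord0) xpredT) //=.
  apply: eq_bigr => x _; rewrite exchange_big /=; apply: eq_bigr => w /andP [w_uniq _].
  rewrite -big_distrl /=; congr (_ * _).
  transitivity (size w); last exact: size_tuple.
  rewrite -(card_uniqP w_uniq) -sum1_card [RHS]big_mkcond /=.
  by apply: eq_bigr => y _; case: (y \in _).
- under eq_bigr => x _ do rewrite exchange_big /=.
  rewrite exchange_big /=; apply: eq_bigr => n _.
  under eq_bigr => x _ do rewrite exchange_big /=.
  rewrite exchange_big /=; apply: eq_bigr => p _.
  rewrite [RHS](partition_big (fun w : n.+1.-tuple 'I_S => tnth w ord0) xpredT) //=.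
  apply: eq_bigr => x _.
  by rewrite [RHS](partition_big (fun w : n.+1.-tuple 'I_S => tnth w (inord p.+1)) xpredT).
Qed.

End Orbits.
End Patterns.

Lemma sum_sub_ord_double n : 2 * \sum_(j < n) (n - j) = n * n.+1.
Proof.
elim: n => [|n IHn]; first by rewrite big_ord0.
rewrite big_ord_recl subn0 (eq_bigr (fun j : 'I_n => n - j)) => [|j _]; last first.
  by rewrite lift0 subSS.
by rewrite mulnDr IHn; lia.
Qed.

Lemma C1count_reach S (f : {ffun 'I_S -> 'I_S}) (x0 : 'I_S) : val x0 = 0 ->
  C1count f = #|[set y | fconnect f x0 y && on_cycle f y]|.
Proof.
move=> x0_0; apply: eq_card => y; rewrite !inE; congr (_ && _).
apply/existsP/idP => [[x /andP [/eqP x_0 x_y]] | x0_y]; last by exists x0; rewrite x0_0 eqxx.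
by have <- : x = x0 by apply: val_inj; rewrite x_0 x0_0.
Qed.

Lemma sumC_le S : sumC S <= \sum_(m < S) npattern S m.+1.
Proof.
apply: leq_trans; first by apply: leq_sum => f _; apply: Ccount_le_walks.
rewrite exchange_big; apply: eq_leq; apply: eq_bigr => m _.
by rewrite exchange_big sum_uniq_follows.
Qed.

Lemma sum_reach_cyclic_ge S (x : 'I_S) :
  \sum_(m < S) m.+1 * m.+2 * npattern S m.+1 <=
  2 * S * \sum_(f : {ffun 'I_S -> 'I_S}) #|[set y | fconnect f x y && on_cycle f y]|.
Proof.
apply: leq_trans; last first.
  by apply: leq_mul (leqnn _) _; apply: leq_sum => f _; apply: reach_cyclic_ge.
rewrite exchange_big big_distrr /=; apply: leq_sum => m _; rewrite exchange_big /=.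
rewrite (eq_bigr (fun _ => \sum_(j < m.+1) (m.+1 - j) * S ^ (S - m.+1))); last first.
  move=> w /andP [w_uniq _]; rewrite exchange_big /=; apply: eq_bigr => j _.
  by rewrite -big_distrl /= sum_follows // mulnC.
rewrite sum_nat_const -big_distrl /= /npattern.
rewrite -(card_uniq_tuple_head m x) -sum_sub_ord_double.
move: #|_| (\sum_(j < m.+1) _) (S ^ (S - m.+1)) => c t p; nia.
Qed.

Lemma sumC_succ_le S : 0 < S -> sumC S + S ^ S <= 2 * sumC1 S.
Proof.
move=> S_gt0; rewrite -(leq_pmul2l S_gt0) mulnDr -sum_k_npattern.
have -> : S * (2 * sumC1 S) = 2 * S *
    \sum_(f : {ffun 'I_S -> 'I_S}) #|[set y | fconnect f (Ordinal S_gt0) y && on_cycle f y]|.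
  by rewrite mulnA (mulnC S 2); congr (_ * _); apply: eq_bigr => f _; apply: C1count_reach.
apply: leq_trans (sum_reach_cyclic_ge _).
apply: leq_trans (leq_add (leq_mul (leqnn S) (sumC_le S)) (leqnn _)) _.
rewrite -sum_k2_npattern -big_split /=; apply: eq_leq; apply: eq_bigr => m _; nia.
Qed.

Lemma sumC1_le S : sumC1 S <= S * S ^ S.
Proof.
have -> : S ^ S = #|{ffun 'I_S -> 'I_S}| by rewrite card_ffun !card_ord.
rewrite /sumC1 mulnC -sum_nat_const.
apply: leq_sum => f _; rewrite -[S in _ <= S]card_ord; exact: max_card.
Qed.

Lemma sumC2_le S : sumC2 S <= 2 * S * S ^ S.
Proof.
rewrite /sumC2; apply: leq_trans; first by apply: leq_sum => f _; apply: Ccount_sq_le_walks.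
rewrite big_split /= exchange_big [X in _ + X]exchange_big /=.
rewrite (eq_bigr (fun m : 'I_S => m.+1 * npattern S m.+1)); last first.
  move=> m _; rewrite exchange_big -(sum_uniq_follows _ _ (rho_next m 0)) big_distrr.
  by apply: eq_bigr => w _; rewrite big_distrr.
rewrite [X in _ + X](eq_bigr (fun n : 'I_S => n * npattern S n.+1)); last first.
  move=> n _; rewrite exchange_big /= (eq_bigr (fun _ => npattern S n.+1)).
    by rewrite sum_nat_const card_ord.
  by move=> p _; rewrite exchange_big sum_uniq_follows.
have : \sum_(n < S) n * npattern S n.+1 <= \sum_(m < S) m.+1 * npattern S m.+1.
  by apply: leq_sum => n _; rewrite leq_mul2r leqnSn orbT.
by rewrite -mulnA sum_k_npattern mul2n -addnn leq_add2l.
Qed.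

(** * Expectations *)

(* Imported only now: Reals rebinds [^] on nat to [Nat.pow]. *)
From Stdlib Require Import Reals Lra.
Open Scope R_scope.

Lemma INR_leq (a b : nat) : leq a b -> INR a <= INR b.
Proof. by move/leP; apply: le_INR. Qed.

Lemma pow_expn a b : Nat.pow a b = expn a b.
Proof. by elim: b => [|b IHb]; rewrite ?expn0 // expnS -IHb. Qed.

Lemma nmaps_expn S : nmaps S = INR (expn S S).
Proof. by rewrite /nmaps pow_expn. Qed.

Lemma nmaps_gt0 S : (0 < S)%nat -> 0 < nmaps S.
Proof.
move=> S_gt0; rewrite nmaps_expn; apply: lt_0_INR; apply/ltP.
by rewrite expn_gt0 S_gt0.
Qed.

Lemma div_nmaps_le S (a b : R) : (0 < S)%nat -> a <= b -> a / nmaps S <= b / nmaps S.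
Proof.
move=> /nmaps_gt0 N_gt0 a_le_b; apply: Rmult_le_compat_r => //.
by left; apply: Rinv_0_lt_compat.
Qed.

Lemma EC_ge0 S : (0 < S)%nat -> 0 <= EC S.
Proof.
move=> S_gt0; have -> : 0 = 0 / nmaps S by rewrite /Rdiv Rmult_0_l.
by apply: div_nmaps_le => //; apply: pos_INR.
Qed.

Lemma EC_succ_le S : (0 < S)%nat -> EC S + 1 <= 2 * EC1 S.
Proof.
move=> S_gt0; have N_gt0 := nmaps_gt0 S_gt0.
have := INR_leq (sumC_succ_le S_gt0).
rewrite plus_INR mult_INR -nmaps_expn /= => sum_le.
have -> : EC S + 1 = (INR (sumC S) + nmaps S) / nmaps S by rewrite /EC; field; lra.
have -> : 2 * EC1 S = ((1 + 1) * INR (sumC1 S)) / nmaps S by rewrite /EC1; field; lra.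
exact: div_nmaps_le.
Qed.

Lemma EC1_le S : (0 < S)%nat -> EC1 S <= INR S.
Proof.
move=> S_gt0; have N_gt0 := nmaps_gt0 S_gt0.
have := INR_leq (sumC1_le S); rewrite mult_INR -nmaps_expn => sum_le.
have -> : INR S = INR S * nmaps S / nmaps S by field; lra.
exact: div_nmaps_le.
Qed.

Lemma EC2_le S : (0 < S)%nat -> EC2 S <= 2 * INR S.
Proof.
move=> S_gt0; have N_gt0 := nmaps_gt0 S_gt0.
have := INR_leq (sumC2_le S); rewrite !mult_INR -nmaps_expn /= => sum_le.
have -> : 2 * INR S = (1 + 1) * INR S * nmaps S / nmaps S by field; lra.
exact: div_nmaps_le.
Qed.

Lemma ln_INR_gt_half S : (2 <= S)%nat -> / 2 < ln (INR S).
Proof.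
move=> S_ge2; apply: Rlt_le_trans ln_lt_2 _.
have : 2 <= INR S by apply: (le_INR 2); apply/leP.
case=> [lt_2S | <-]; last exact: Rle_refl.
by left; apply: ln_increasing; lra.
Qed.

Lemma ln_INR_ge1 S : (3 <= S)%nat -> 1 <= ln (INR S).
Proof.
move=> S_ge3; have S_ge3R : INR 3 <= INR S by apply: le_INR; apply/leP.
rewrite /= in S_ge3R; rewrite -[1](ln_exp 1).
have [lt_eS | ->] : exp 1 < INR S \/ exp 1 = INR S by have := exp_le_3; lra.
  by left; apply: ln_increasing => //; apply: exp_pos.
exact: Rle_refl.
Qed.

Theorem lemma1 :
  (forall S : nat, (2 <= S)%nat -> EC S < EC1 S * (ln (INR S) + 1)) /\
  (exists K : R, 0 < K /\
     forall S : nat, (2 <= S)%nat -> VarC S <= K * INR S * ln (INR S)).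
Proof.
split.
  move=> S S_ge2; have S_gt0 : (0 < S)%nat by lia.
  have := EC_ge0 S_gt0; have := EC_succ_le S_gt0; have := EC1_le S_gt0.
  have [-> | S_ge3] : S = 2%nat \/ (3 <= S)%nat by lia.
    have -> : INR 2 = 2 by rewrite /=; lra.
    by have := ln_lt_2; nra.
  by have := ln_INR_ge1 S_ge3; nra.
exists 4; split; first lra.
move=> S S_ge2; have S_gt0 : (0 < S)%nat by lia.
have := EC2_le S_gt0; have := ln_INR_gt_half S_ge2.
have := pos_INR S; have := Rle_0_sqr (EC S); rewrite /VarC /Rsqr; nra.
Qed.
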